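(* Let $\mathcal X\subseteq\mathcal G$ be a class of objects. Let $\mathrm{Filt}(\mathcal X)$ be the class of all $M\in\mathcal G$ admitting a chain $0=M_0\subseteq M_1\subseteq\cdots\subseteq M_k=M$ in which every $M_i$ is a strict subobject of $M$ and every quotient $M_i/M_{i-1}$ ($1\le i\le k$) is a strict quotient of some object of $\mathcal X$. Then $\mathrm{Filt}(\mathcal X)$ is a pseudo-torsion class, and it is contained in every pseudo-torsion class that contains $\mathcal X$; i.e. it is the smallest pseudo-torsion class containing $\mathcal X$.
   Context: Let $\Lambda$ be a finite dimensional algebra over a field and $\mathrm{mod}\text-\Lambda$ the category of finitely generated right $\Lambda$-modules. Fix a torsion class $\mathcal G\subseteq\mathrm{mod}\text-\Lambda$, i.e. a class of modules closed under isomorphisms, extensions and quotients. For $B\in\mathcal G$, a subobject of $B$ is a submodule of $B$ that lies in $\mathcal G$. A subobject $A\subseteq B$ is a strict subobject if $A\cap B'\in\mathcal G$ for every subobject $B'$ of $B$. A strict quotient of $B$ is $B/A$ with $A$ a strict subobject. A short exact sequence $0\to A\to B\to C\to0$ with $A,B,C\in\mathcal G$ is strict exact (and $B$ a strict extension of $A$ by $C$) if the image of $A$ is a strict subobject of $B$. A pseudo-torsion class is a nonempty class $\mathcal P\subseteq\mathcal G$ closed under strict quotients (if $A\in\mathcal P$ then every strict quotient of $A$ is in $\mathcal P$) and strict extensions (if $0\to A\to B\to C\to0$ is strict exact with $A,C\in\mathcal P$ then $B\in\mathcal P$). *)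

From HB Require Import structures.
From mathcomp Require Import all_boot all_order all_algebra.
From mathcomp Require Import falgebra.
Set Implicit Arguments. Unset Strict Implicit. Unset Printing Implicit Defensive.
Import GRing.Theory.
Local Open Scope ring_scope.

Section Defs.
Variables (F : fieldType) (L : falgType F).

(* A finitely generated (= finite dimensional) right L-module: the space
   of row vectors 'rV[F]_mdim, with v.a := v *m mact a. *)
Record rmod := RMod {
  mdim : nat;
  mact : L -> 'M[F]_mdim;
  mact_lin : forall (k : F) (a b : L), mact (k *: a + b) = k *: mact a + mact b;
  mact_mul : forall a b : L, mact (a * b) = mact a *m mact b;
  mact_one : mact 1 = 1%:M
}.

Definition submod (M : rmod) (U : 'M[F]_(mdim M)) : Prop :=
  forall a : L, (U *m mact M a <= U)%MS.

(* N is isomorphic to the subquotient V/U of M (U <= V submodules of M),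
   via the map x |-> x *m f (mod U). *)
Definition iso_sq (N M : rmod) (U V : 'M[F]_(mdim M)) : Prop :=
  submod U /\ submod V /\ (U <= V)%MS /\
  exists f : 'M[F]_(mdim N, mdim M),
    [/\ (f <= V)%MS,
        forall x : 'rV[F]_(mdim N), (x *m f <= U)%MS -> x = 0,
        (V <= f + U)%MS &
        forall a : L, (mact N a *m f - f *m mact M a <= U)%MS].

Arguments iso_sq N M U V : clear implicits.

Definition iso (N M : rmod) : Prop := iso_sq N M 0 1%:M.

Definition mclass := rmod -> Prop.

Definition inSQ (C : mclass) (M : rmod) (U V : 'M[F]_(mdim M)) : Prop :=
  exists N, C N /\ iso_sq N M U V.

Arguments inSQ C M U V : clear implicits.

Definition torsion_class (G : mclass) : Prop :=
  [/\ exists M, G M,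
      forall N M, iso N M -> G N -> G M,
      forall M U, submod U -> inSQ G M 0 U -> inSQ G M U 1%:M -> G M &
      forall M U, submod U -> G M -> inSQ G M U 1%:M].

Variable G : mclass.

Definition subobj (B : rmod) (A : 'M[F]_(mdim B)) : Prop :=
  submod A /\ inSQ G B 0 A.

Definition strict_subobj (B : rmod) (A : 'M[F]_(mdim B)) : Prop :=
  subobj A /\ forall B' : 'M[F]_(mdim B), subobj B' -> inSQ G B 0 (A :&: B')%MS.

Definition strict_quot (C B : rmod) : Prop :=
  G B /\ exists A : 'M[F]_(mdim B), strict_subobj A /\ iso_sq C B A 1%:M.

Definition pseudo_torsion (P : mclass) : Prop :=
  [/\ exists M, P M,
      forall M, P M -> G M,
      forall B C, P B -> strict_quot C B -> P C &
      forall B (A : 'M[F]_(mdim B)), G B -> strict_subobj A ->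
        inSQ P B 0 A -> inSQ P B A 1%:M -> P B].

Definition Filt (X : mclass) : mclass := fun M =>
  G M /\ exists (k : nat) (Ms : nat -> 'M[F]_(mdim M)),
    [/\ (Ms 0%N == (0 : 'M[F]_(mdim M)))%MS, (Ms k == 1%:M)%MS,
        forall i, (i <= k)%N -> strict_subobj (Ms i),
        forall i, (0 < i <= k)%N -> (Ms i.-1 <= Ms i)%MS &
        forall i, (0 < i <= k)%N ->
          exists N, iso_sq N M (Ms i.-1) (Ms i) /\
                    exists X0, X X0 /\ strict_quot N X0].

End Defs.

(* An isomorphism N ~= V / U identifies the submodules of N with the submodules
   of M between U and V, compatibly with subquotients, intersections and
   strictness, so every argument can be run inside a single ambient module.  Filt X is closed under strict extensions because the
   preimages of filtrations of A and of B / A concatenate to a filtration of B.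
   It is closed under strict quotients B / A because the factors
   (M_i + A) / (M_(i-1) + A) ~= M_i / (M_i :&: (M_(i-1) + A)) are strict
   quotients of M_i / M_(i-1): by the modular law and the strictness of A, the
   intersection is M_(i-1) + (A :&: M_i), strict over M_(i-1).  Finally, along a
   filtration of M each M_i is a strict extension of M_(i-1) by a strict quotient
   of an object of X, so M lies in every pseudo-torsion class containing X. *)

From mathcomp Require Import all_boot all_order all_algebra.
From mathcomp Require Import falgebra zify.
Set Implicit Arguments. Unset Strict Implicit. Unset Printing Implicit Defensive.
Import GRing.Theory.
Local Open Scope ring_scope.

Section MatrixFacts.
Variable F : fieldType.

Lemma submx_subr n m1 m2 (A B : 'M[F]_(m1, n)) (U : 'M_(m2, n)) :
  (A - B <= U)%MS -> (B <= U)%MS -> (A <= U)%MS.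
Proof. by move=> AB_U B_U; rewrite -(subrK B A); apply: addmx_sub. Qed.

Lemma subr_submx_trans n m1 m2 (A B C : 'M[F]_(m1, n)) (U : 'M_(m2, n)) :
  (A - B <= U)%MS -> (B - C <= U)%MS -> (A - C <= U)%MS.
Proof. by move=> AB BC; rewrite -(subrK B A) -addrA addmx_sub. Qed.

(* A left inverse of f modulo U, when f is injective modulo U. *)
Definition invmod n m (f : 'M[F]_(n, m)) (U : 'M[F]_m) : 'M[F]_(m, n) :=
  proj_mx <<f>>%MS U *m pinvmx f.

Lemma invmodKV n m (f : 'M[F]_(n, m)) (U : 'M_m) k (W : 'M_(k, m)) :
  (W <= f + U)%MS -> (W *m invmod f U *m f - W <= U)%MS.
Proof.
move=> W_fU; rewrite /invmod mulmxA mulmxKpV; last first.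
  by apply: submx_trans (proj_mx_sub _ _ _) _; rewrite genmxE.
rewrite -opprB eqmx_opp proj_mx_compl_sub //.
by apply: submx_trans W_fU _; apply: addsmxS; rewrite ?genmxE.
Qed.

Section InjectiveModulo.
Variables (n m : nat) (f : 'M[F]_(n, m)) (U : 'M[F]_m).
Hypothesis f_inj : forall x : 'rV_n, (x *m f <= U)%MS -> x = 0.

Lemma injmod_rows k (W : 'M_(k, n)) : (W *m f <= U)%MS -> W = 0.
Proof.
move=> WfU; apply/row_matrixP => i; rewrite row0; apply: f_inj.
by rewrite -row_mul; apply: submx_trans (row_sub i _) WfU.
Qed.

Let f_capU : (<<f>> :&: U)%MS = 0.
Proof.
apply/eqP; rewrite -submx0 (cap_eqmx (genmxE f) (eqmx_refl U)).
have f_cap : ((f :&: U)%MS <= f)%MS := capmxSl _ _.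
have cap0 : (f :&: U)%MS *m pinvmx f = 0.
  by apply: injmod_rows; rewrite mulmxKpV // capmxSr.
by rewrite -(mulmxKpV f_cap) cap0 mul0mx.
Qed.

Lemma invmodK k (Y : 'M_(k, n)) : Y *m f *m invmod f U = Y.
Proof.
have f_free : row_free f.
  by apply: inj_row_free => v vf0; apply: f_inj; rewrite vf0 sub0mx.
rewrite /invmod -(mulmxA Y) (mulmxA f) proj_mx_id ?genmxE //.
by rewrite mulmxVp // mulmx1.
Qed.

Lemma invmod_sub0 k (W : 'M_(k, m)) : (W <= U)%MS -> W *m invmod f U = 0.
Proof. by move=> WU; rewrite /invmod mulmxA proj_mx_0 // mul0mx. Qed.

End InjectiveModulo.
End MatrixFacts.

Section Submodules.
Variables (F : fieldType) (L : falgType F).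
Local Notation rmod := (rmod L).
Implicit Types (M N K : rmod) (C : mclass L).

Lemma submod0 M : submod (0 : 'M_(mdim M)).
Proof. by move=> a; rewrite mul0mx sub0mx. Qed.

Lemma submod1 M : submod (1%:M : 'M_(mdim M)).
Proof. by move=> a; rewrite submx1. Qed.

Lemma eqmx_submod M (U U' : 'M_(mdim M)) : (U :=: U')%MS -> submod U -> submod U'.
Proof. by move=> eqUU' sU a; rewrite -(eqmxMr _ eqUU') -eqUU'. Qed.

Lemma submodMr M (U : 'M_(mdim M)) k (Y : 'M_(k, mdim M)) a :
  submod U -> (Y <= U)%MS -> (Y *m mact M a <= U)%MS.
Proof. by move=> sU YU; apply: submx_trans (submxMr _ YU) (sU a). Qed.

Lemma submod_adds M (U W : 'M_(mdim M)) : submod U -> submod W -> submod (U + W)%MS.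
Proof. by move=> sU sW a; rewrite addsmxMr addsmxS. Qed.

Lemma submod_cap M (U W : 'M_(mdim M)) : submod U -> submod W -> submod (U :&: W)%MS.
Proof. by move=> sU sW a; apply: submx_trans (capmxMr _ _ _) (capmxS _ _). Qed.

End Submodules.

Definition iso_sq_via {F : fieldType} {L : falgType F} (N M : rmod L)
    (U V : 'M[F]_(mdim M)) (f : 'M[F]_(mdim N, mdim M)) :=
  submod U /\ submod V /\ (U <= V)%MS /\
  [/\ (f <= V)%MS, forall x : 'rV_(mdim N), (x *m f <= U)%MS -> x = 0,
      (V <= f + U)%MS & forall a, (mact N a *m f - f *m mact M a <= U)%MS].
Arguments iso_sq_via {F L} N {M} U V f.

Section Subquotients.
Variables (F : fieldType) (L : falgType F).
Local Notation rmod := (rmod L).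
Implicit Types (M N K : rmod) (C : mclass L).

Lemma iso_sqP N M (U V : 'M_(mdim M)) :
  iso_sq N U V <-> exists f, iso_sq_via N U V f.
Proof.
split=> [[sU [sV [UV [f isoNf]]]] | [f [sU [sV [UV isoNf]]]]]; first by exists f.
by do 3!split=> //; exists f.
Qed.

Lemma iso_sq_submod N M (U V : 'M_(mdim M)) :
  iso_sq N U V -> [/\ submod U, submod V & (U <= V)%MS].
Proof. by case=> sU [sV [UV _]]. Qed.

Lemma inSQ_submod C M (U V : 'M_(mdim M)) :
  inSQ C U V -> [/\ submod U, submod V & (U <= V)%MS].
Proof. by case=> N [_ /iso_sq_submod]. Qed.

Lemma inSQ_sub C C' M (U V : 'M_(mdim M)) :
  (forall N, C N -> C' N) -> inSQ C U V -> inSQ C' U V.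
Proof. by move=> CC' [N [CN isoN]]; exists N; split; first exact: CC'. Qed.

Lemma eqmx_iso_sq N M (U V U' V' : 'M_(mdim M)) :
  (U :=: U')%MS -> (V :=: V')%MS -> iso_sq N U V -> iso_sq N U' V'.
Proof.
move=> eqU eqV [sU [sV [UV [f [fV f_inj Vf fL]]]]].
split; first exact: eqmx_submod eqU sU.
split; first exact: eqmx_submod eqV sV.
split; first by rewrite -eqU -eqV.
exists f; split=> [|x||a]; rewrite -?eqU -?eqV //; first exact: f_inj.
by rewrite -(adds_eqmx (eqmx_refl f) eqU).
Qed.

Lemma eqmx_inSQ C M (U V U' V' : 'M_(mdim M)) :
  (U :=: U')%MS -> (V :=: V')%MS -> inSQ C U V -> inSQ C U' V'.
Proof. by move=> eqU eqV [N [CN isoN]]; exists N; split; last exact: eqmx_iso_sq isoN. Qed.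

Lemma iso_sq_id M : iso_sq M (0 : 'M_(mdim M)) 1%:M.
Proof.
split; first exact: submod0. split; first exact: submod1. split; first exact: sub0mx.
exists 1%:M; split=> [|x||a]; rewrite ?submx1 ?addsmxSl //.
  by rewrite mulmx1 submx0 => /eqP.
by rewrite mulmx1 mul1mx subrr sub0mx.
Qed.

End Subquotients.

Section Correspondence.
Variables (F : fieldType) (L : falgType F).
Local Notation rmod := (rmod L).
Variables (N M : rmod) (U V : 'M[F]_(mdim M)) (f : 'M[F]_(mdim N, mdim M)).
Hypothesis isoNf : iso_sq_via N U V f.

Let sU : submod U. Proof. by case: isoNf. Qed.
Let sV : submod V. Proof. by case: isoNf => _ []. Qed.
Let UV : (U <= V)%MS. Proof. by case: isoNf => _ [_ []]. Qed.
Let fV : (f <= V)%MS. Proof. by case: isoNf => _ [_ [_ []]]. Qed.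
Let f_inj : forall x : 'rV_(mdim N), (x *m f <= U)%MS -> x = 0.
Proof. by case: isoNf => _ [_ [_ []]]. Qed.
Let Vf : (V <= f + U)%MS. Proof. by case: isoNf => _ [_ [_ []]]. Qed.
Let fL a : (mact N a *m f - f *m mact M a <= U)%MS.
Proof. by case: isoNf => _ [_ [_ []]]. Qed.

Local Notation g := (invmod f U).

Let fgK k (Y : 'M_(k, mdim N)) : Y *m f *m g = Y.
Proof. exact: invmodK. Qed.
Let gfK k (W : 'M_(k, mdim M)) : (W <= V)%MS -> (W *m g *m f - W <= U)%MS.
Proof. by move=> WV; apply: invmodKV; apply: submx_trans Vf. Qed.
Let gU k (W : 'M_(k, mdim M)) : (W <= U)%MS -> W *m g = 0.
Proof. exact: invmod_sub0. Qed.

Let fL_rows k (Y : 'M_(k, mdim N)) a :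
  (Y *m mact N a *m f - Y *m f *m mact M a <= U)%MS.
Proof. by rewrite -!mulmxA -mulmxBr mulmx_sub. Qed.

Let gL_rows k (Y : 'M_(k, mdim M)) a : (Y <= V)%MS ->
  Y *m mact M a *m g = Y *m g *m mact N a.
Proof.
move=> YV; apply/eqP; rewrite -subr_eq0; apply/eqP; apply: (injmod_rows f_inj).
rewrite mulmxBl; apply: subr_submx_trans (gfK (submodMr a sV YV)) _.
apply: subr_submx_trans (_ : (_ - Y *m g *m f *m mact M a <= U)%MS) _.
  by rewrite -opprB eqmx_opp -mulmxBl; apply: submodMr (gfK YV).
by rewrite -opprB eqmx_opp fL_rows.
Qed.

Definition sq_preim (W : 'M[F]_(mdim N)) : 'M[F]_(mdim M) := (W *m f + U)%MS.
Definition sq_img (Z : 'M[F]_(mdim M)) : 'M[F]_(mdim N) := <<Z *m g>>%MS.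

Lemma sq_preim_ge W : (U <= sq_preim W)%MS.
Proof. exact: addsmxSr. Qed.

Lemma sq_preim_le W : (sq_preim W <= V)%MS.
Proof. by rewrite addsmx_sub UV andbT (submx_trans (submxMl _ _) fV). Qed.

Lemma sq_preimS W1 W2 : (W1 <= W2)%MS -> (sq_preim W1 <= sq_preim W2)%MS.
Proof. by move=> W12; rewrite addsmxS ?submxMr. Qed.

Lemma sq_preim_eqmx W1 W2 : (W1 :=: W2)%MS -> (sq_preim W1 :=: sq_preim W2)%MS.
Proof. by move=> eqW; apply/eqmxP; rewrite !sq_preimS ?eqW. Qed.

Lemma sq_preim0 : (sq_preim 0 :=: U)%MS.
Proof. by rewrite /sq_preim mul0mx; apply: adds0mx. Qed.

Lemma sq_preim1 : (sq_preim 1%:M :=: V)%MS.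
Proof. by apply/eqmxP; rewrite sq_preim_le /sq_preim mul1mx. Qed.

Lemma sub_sq_preim k (Z : 'M_(k, mdim M)) W :
  (Z <= V)%MS -> (Z *m g <= W)%MS -> (Z <= sq_preim W)%MS.
Proof.
move=> ZV ZgW; apply: (submx_subr (B := Z *m g *m f)).
  by rewrite -opprB eqmx_opp (submx_trans (gfK ZV)) ?sq_preim_ge.
by apply: submx_trans (addsmxSl _ _); apply: submxMr.
Qed.

Lemma sq_preim_sub k (Z : 'M_(k, mdim M)) W :
  (Z <= sq_preim W)%MS -> (Z *m g <= W)%MS.
Proof.
by move/(submxMr g); rewrite addsmxMr (gU (submx_refl U)) fgK addsmx0.
Qed.

Lemma sub_sq_img k (Y : 'M_(k, mdim N)) Z : (Y *m f <= Z)%MS -> (Y <= sq_img Z)%MS.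
Proof. by move=> YfZ; rewrite genmxE -[Y]fgK submxMr. Qed.

Lemma sq_img_sub k (Y : 'M_(k, mdim N)) Z : (U <= Z)%MS -> (Z <= V)%MS ->
  (Y <= sq_img Z)%MS -> (Y *m f <= Z)%MS.
Proof.
move=> UZ ZV; rewrite genmxE => /(submxMr f) Yf; apply: submx_trans Yf _.
by apply: (submx_subr (B := Z)) => //; apply: submx_trans (gfK ZV) UZ.
Qed.

Lemma sq_imgS Z1 Z2 : (Z1 <= Z2)%MS -> (sq_img Z1 <= sq_img Z2)%MS.
Proof. by move=> Z12; rewrite !genmxE submxMr. Qed.

Lemma sq_img_eqmx Z1 Z2 : (Z1 :=: Z2)%MS -> (sq_img Z1 :=: sq_img Z2)%MS.
Proof. by move=> eqZ; apply/eqmxP; rewrite !sq_imgS ?eqZ. Qed.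

Lemma sq_img0 : (sq_img U :=: (0 : 'M_(mdim N)))%MS.
Proof. by rewrite /sq_img (gU (submx_refl U)) genmx0. Qed.

Lemma sq_img1 : (sq_img V :=: 1%:M)%MS.
Proof. by apply/eqmxP; rewrite submx1 sub_sq_img ?mul1mx. Qed.

Lemma sq_preimK W : (sq_img (sq_preim W) :=: W)%MS.
Proof.
by apply/eqmxP; rewrite genmxE sq_preim_sub ?sub_sq_img ?addsmxSl.
Qed.

Lemma sq_imgK Z : (U <= Z)%MS -> (Z <= V)%MS -> (sq_preim (sq_img Z) :=: Z)%MS.
Proof.
move=> UZ ZV; apply/eqmxP.
by rewrite addsmx_sub UZ sq_img_sub // sub_sq_preim // genmxE.
Qed.

Lemma sq_preimI W1 W2 :
  (sq_preim (W1 :&: W2) :=: sq_preim W1 :&: sq_preim W2)%MS.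
Proof.
apply/eqmxP; rewrite sub_capmx !sq_preimS ?capmxSl ?capmxSr //=.
rewrite sub_sq_preim ?(submx_trans (capmxSl _ _)) ?sq_preim_le //.
by rewrite sub_capmx !sq_preim_sub ?capmxSl ?capmxSr.
Qed.

Lemma submod_sq_preim W : submod W -> submod (sq_preim W).
Proof.
move=> sW a; rewrite /sq_preim addsmxMr addsmx_sub (submx_trans (sU a)) ?addsmxSr ?andbT //.
apply: (submx_subr (B := W *m mact N a *m f)).
  by rewrite -opprB eqmx_opp (submx_trans (fL_rows _ _)) ?addsmxSr.
by apply: submx_trans (addsmxSl _ _); apply: submxMr (sW a).
Qed.

Lemma submod_sq_img Z : (Z <= V)%MS -> submod Z -> submod (sq_img Z).
Proof.
move=> ZV sZ a; rewrite /sq_img (eqmxMr _ (genmxE _)) genmxE -(gL_rows _ ZV).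
exact: submxMr (sZ a).
Qed.

Lemma iso_sq_preim K W1 W2 : iso_sq K W1 W2 -> iso_sq K (sq_preim W1) (sq_preim W2).
Proof.
move=> [sW1 [sW2 [W12 [h [hW2 h_inj W2h hL]]]]].
split; first exact: submod_sq_preim.
split; first exact: submod_sq_preim.
split; first exact: sq_preimS.
exists (h *m f); split=> [|x||a].
- by apply: submx_trans (addsmxSl _ _); apply: submxMr.
- by rewrite mulmxA => /sq_preim_sub; rewrite fgK; apply: h_inj.
- rewrite addsmx_sub (submx_trans (addsmxSr (W1 *m f) U)) ?addsmxSr ?andbT //.
  by apply: submx_trans (submxMr f W2h) _; rewrite addsmxMr addsmxS ?addsmxSl.
- rewrite mulmxA; apply: subr_submx_trans (_ : (_ - h *m mact N a *m f <= _)%MS) _.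
    by rewrite -mulmxBl; apply: submx_trans (addsmxSl _ _); apply: submxMr.
  by rewrite (submx_trans (fL_rows _ _)) ?addsmxSr.
Qed.

Lemma iso_sq_img K Z1 Z2 : (U <= Z1)%MS -> (Z2 <= V)%MS -> iso_sq K Z1 Z2 ->
  iso_sq K (sq_img Z1) (sq_img Z2).
Proof.
move=> UZ1 Z2V [sZ1 [sZ2 [Z12 [h [hZ2 h_inj Z2h hL]]]]].
have Z1V : (Z1 <= V)%MS := submx_trans Z12 Z2V.
have hV : (h <= V)%MS := submx_trans hZ2 Z2V.
split; first exact: submod_sq_img.
split; first exact: submod_sq_img.
split; first exact: sq_imgS.
exists (h *m g); split=> [|x||a].
- by rewrite genmxE submxMr.
- rewrite mulmxA => /sq_img_sub xhg; apply: h_inj.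
  apply: (submx_subr (B := x *m h *m g *m f)); last exact: xhg.
  by rewrite -opprB eqmx_opp (submx_trans (gfK (submx_trans (submxMl _ _) hV))).
- rewrite /sq_img genmxE; apply: submx_trans (submxMr g Z2h) _.
  by rewrite addsmxMr addsmxS ?genmxE.
- by rewrite mulmxA -(gL_rows a hV) -mulmxBl genmxE submxMr.
Qed.

Lemma inSQ_sq_preim C W1 W2 :
  inSQ C W1 W2 -> inSQ C (sq_preim W1) (sq_preim W2).
Proof. by move=> [K [CK isoK]]; exists K; split; last exact: iso_sq_preim. Qed.

Lemma inSQ_sq_img C Z1 Z2 : (U <= Z1)%MS -> (Z2 <= V)%MS ->
  inSQ C Z1 Z2 -> inSQ C (sq_img Z1) (sq_img Z2).
Proof. by move=> UZ1 Z2V [K [CK isoK]]; exists K; split; last exact: iso_sq_img. Qed.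

End Correspondence.

Section SubquotientModules.
Variables (F : fieldType) (L : falgType F).
Local Notation rmod := (rmod L).
Implicit Types (M N K Z : rmod) (C : mclass L).

Lemma subquotient_exists M (U V : 'M[F]_(mdim M)) :
  submod U -> submod V -> (U <= V)%MS -> exists N : rmod, iso_sq N U V.
Proof.
move=> sU sV UV; set B := row_base (V :\: U)%MS.
have BU : (B :&: U)%MS = 0.
  by apply/eqP; rewrite -submx0 -(capmx_diff V U) capmxS ?eq_row_base.
have B_inj (x : 'rV_(\rank (V :\: U))) : (x *m B <= U)%MS -> x = 0.
  move=> xBU; apply/eqP; rewrite -(mulmx_free_eq0 _ (row_base_free _)) -submx0.
  by rewrite -BU sub_capmx submxMl.
have BV : (B <= V)%MS by rewrite eq_row_base diffmxSl.
have VBU : (V <= B + U)%MS.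
  rewrite -{1}(addsmx_diff_cap_eq V U) addsmxS ?capmxSr //.
  by rewrite eq_row_base.
have BaV a : (B *m mact M a <= B + U)%MS by apply: submx_trans VBU; apply: submodMr.
pose act a := B *m mact M a *m invmod B U.
have act_lin k a b : act (k *: a + b) = k *: act a + act b.
  by rewrite /act mact_lin mulmxDr mulmxDl -scalemxAr -scalemxAl.
have act_mul a b : act (a * b) = act a *m act b.
  apply/eqP; rewrite eq_sym -subr_eq0; apply/eqP.
  have -> : act a *m act b - act (a * b) =
      (B *m mact M a *m invmod B U *m B - B *m mact M a) *m mact M b *m invmod B U.
    by rewrite /act mact_mul !mulmxBl !mulmxA.
  by rewrite (invmod_sub0 B_inj) // submodMr // invmodKV.
have act_one : act 1 = 1%:M by rewrite /act mact_one mulmx1 -{1}[B]mul1mx invmodK.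
exists (RMod act_lin act_mul act_one); apply/iso_sqP; exists B.
do 3!split=> //; split=> //= a.
exact: invmodKV (BaV a).
Qed.

Lemma iso_sq_diag_trivial Z M (U : 'M[F]_(mdim M)) :
  iso_sq Z U U -> (1%:M : 'M[F]_(mdim Z)) = 0.
Proof.
case/iso_sqP=> f [_ [_ [_ [fU f_inj _ _]]]].
by apply: (injmod_rows f_inj); rewrite mul1mx.
Qed.

Lemma iso_sq_diag Z M1 M2 (U : 'M[F]_(mdim M1)) (U' : 'M[F]_(mdim M2)) :
  iso_sq Z U U -> submod U' -> iso_sq Z U' U'.
Proof.
move=> /iso_sq_diag_trivial Z0 sU'; apply/iso_sqP; exists 0.
do 3!split=> //; split=> [|x _||a]; rewrite ?sub0mx ?addsmxSr //.
  by rewrite -[x]mulmx1 Z0 mulmx0.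
by rewrite mulmx0 mul0mx subrr sub0mx.
Qed.

Lemma inSQ_diag C M1 M2 (U : 'M[F]_(mdim M1)) (U' : 'M[F]_(mdim M2)) :
  inSQ C U U -> submod U' -> inSQ C U' U'.
Proof. by move=> [Z [CZ isoZ]] sU'; exists Z; split; last exact: iso_sq_diag isoZ sU'. Qed.

(* Second isomorphism theorem: V / (V :&: (U + W)) ~= (V + W) / (U + W). *)
Lemma iso_sq_addsmx K M (U V W : 'M[F]_(mdim M)) :
  submod U -> submod W -> (U <= V)%MS ->
  iso_sq K (V :&: (U + W))%MS V -> iso_sq K (U + W)%MS (V + W)%MS.
Proof.
move=> sU sW UV /iso_sqP [f [_ [sV [_ [fV f_inj Vf fL]]]]].
apply/iso_sqP; exists f; split; first exact: submod_adds.
split; first exact: submod_adds.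
split; first exact: addsmxS.
split=> [|x xf||a].
- exact: submx_trans fV (addsmxSl _ _).
- by apply: f_inj; rewrite sub_capmx xf (submx_trans (submxMl _ _) fV).
- rewrite addsmx_sub (submx_trans Vf) ?addsmxS ?capmxSr //=.
  exact: submx_trans (addsmxSr U W) (addsmxSr _ _).
- exact: submx_trans (fL a) (capmxSr _ _).
Qed.

Lemma iso_sq_capmx K M (U V W : 'M[F]_(mdim M)) :
  submod V -> submod W ->
  iso_sq K (U + W)%MS (V + W)%MS -> iso_sq K (V :&: (U + W))%MS V.
Proof.
move=> sV sW /iso_sqP [f [sUW [_ [_ [fVW f_inj VWf fL]]]]].
have VW : (V + W <= (V :\: W) + W)%MS.
  rewrite addsmx_sub addsmxSr andbT -{1}(addsmx_diff_cap_eq V W).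
  by rewrite addsmxS ?capmxSr.
pose h := f *m proj_mx (V :\: W)%MS W.
have hV : (h <= V)%MS by apply: submx_trans (proj_mx_sub _ _ _) (diffmxSl _ _).
have fhW : (f - h <= W)%MS by apply: proj_mx_compl_sub; apply: submx_trans fVW VW.
have fhUW : (f - h <= U + W)%MS := submx_trans fhW (addsmxSr _ _).
apply/iso_sqP; exists h; split; first exact: submod_cap.
split=> //; split; first exact: capmxSl.
split=> // [x||a].
- rewrite sub_capmx => /andP [_ xhUW]; apply: f_inj.
  by apply: (submx_subr (B := x *m h)); rewrite // -mulmxBr mulmx_sub.
- have /sub_addsmxP [c defV] : (V <= f + (U + W))%MS.
    exact: submx_trans (addsmxSl V W) VWf.
  rewrite -[X in (X <= _)%MS](subrK (c.1 *m h)) addsmxC addmx_sub_adds ?submxMl //.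
  rewrite sub_capmx addmx_sub ?eqmx_opp ?(submx_trans (submxMl _ _) hV) //=.
  have -> : V - c.1 *m h = c.1 *m (f - h) + c.2 *m (U + W)%MS.
    by rewrite {1}defV mulmxBr addrAC.
  by rewrite addmx_sub ?mulmx_sub ?submxMl.
- rewrite sub_capmx addmx_sub ?eqmx_opp ?(submodMr _ sV) //=; last first.
    exact: submx_trans (submxMl _ _) hV.
  apply: subr_submx_trans (_ : (_ - mact K a *m f <= _)%MS) _.
    by rewrite -mulmxBr -opprB mulmxN eqmx_opp mulmx_sub.
  apply: subr_submx_trans (fL a) _.
  by rewrite -mulmxBl; apply: submodMr.
Qed.

Lemma inSQ_addsmx C M (U V W : 'M[F]_(mdim M)) :
  submod U -> submod W -> (U <= V)%MS ->
  inSQ C (V :&: (U + W))%MS V -> inSQ C (U + W)%MS (V + W)%MS.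
Proof. by move=> sU sW UV [K [CK isoK]]; exists K; split; last exact: iso_sq_addsmx. Qed.

Lemma inSQ_capmx C M (U V W : 'M[F]_(mdim M)) :
  submod V -> submod W ->
  inSQ C (U + W)%MS (V + W)%MS -> inSQ C (V :&: (U + W))%MS V.
Proof. by move=> sV sW [K [CK isoK]]; exists K; split; last exact: iso_sq_capmx. Qed.

Lemma iso_sym N M : iso N M -> iso M N.
Proof.
case/iso_sqP=> f isoNf; have := iso_sq_img isoNf (submx_refl 0) (submx_refl _) (iso_sq_id M).
exact: eqmx_iso_sq (sq_img0 isoNf) (sq_img1 isoNf).
Qed.

End SubquotientModules.

Section TorsionClass.
Variables (F : fieldType) (L : falgType F).
Local Notation rmod := (rmod L).
Implicit Types (M N K : rmod).
Variable G : mclass L.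
Lemma G_inSQ M : G M -> inSQ G (0 : 'M[F]_(mdim M)) 1%:M.
Proof. by move=> GM; exists M; split; last exact: iso_sq_id. Qed.

Lemma strict_subobj1 M : G M -> strict_subobj G (1%:M : 'M[F]_(mdim M)).
Proof.
move=> GM; split=> [|B' [_ GB']]; last by rewrite cap1mx.
by split; [exact: submod1 | exact: G_inSQ].
Qed.

Lemma strict_sq_preim_sub N M (A : 'M[F]_(mdim M)) f (W : 'M[F]_(mdim N)) :
  iso_sq_via N 0 A f -> strict_subobj G A -> strict_subobj G W ->
  strict_subobj G (sq_preim 0 f W).
Proof.
move=> isoNf [[sA GA] strictA] [[sW GW] strictW].
have preim0 := sq_preim0 (0 : 'M_(mdim M)) f.
split.
  split; first exact: (submod_sq_preim isoNf sW).
  exact: eqmx_inSQ preim0 (eqmx_refl _) (inSQ_sq_preim isoNf GW).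
move=> B' [sB' GB']; set D := (A :&: B')%MS.
have DA : (D <= A)%MS := capmxSl _ _.
have GD : inSQ G 0 (sq_img 0 f D).
  apply: eqmx_inSQ (sq_img0 isoNf) (eqmx_refl _) _.
  exact: (inSQ_sq_img isoNf (submx_refl 0) DA (strictA B' (conj sB' GB'))).
have := inSQ_sq_preim isoNf (strictW _ (conj (submod_sq_img isoNf DA (submod_cap sA sB')) GD)).
apply: eqmx_inSQ preim0 _; apply: eqmx_trans (sq_preimI isoNf _ _) _.
apply: eqmx_trans (cap_eqmx (eqmx_refl _) (sq_imgK isoNf (sub0mx _ D) DA)) _.
by rewrite capmxA; apply: cap_eqmx (capmx_idPl (sq_preim_le isoNf W)) (eqmx_refl _).
Qed.

(* The last hypothesis says that Z / U is strict in V / U. *)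
Lemma strict_sq_img N M (U V Z : 'M[F]_(mdim M)) f :
  iso_sq_via N U V f -> (U <= Z)%MS -> (Z <= V)%MS -> submod Z -> inSQ G U Z ->
  (forall D : 'M[F]_(mdim M), submod D -> (U <= D)%MS -> (D <= V)%MS ->
     inSQ G U D -> inSQ G U (Z :&: D)%MS) ->
  strict_subobj G (sq_img U f Z).
Proof.
move=> isoNf UZ ZV sZ GUZ strictZ; split.
  split; first exact: (submod_sq_img isoNf ZV sZ).
  exact: eqmx_inSQ (sq_img0 isoNf) (eqmx_refl _) (inSQ_sq_img isoNf (submx_refl U) ZV GUZ).
move=> B' [sB' GB'].
have GUP : inSQ G U (sq_preim U f B').
  exact: eqmx_inSQ (sq_preim0 U f) (eqmx_refl _) (inSQ_sq_preim isoNf GB').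
have := strictZ _ (submod_sq_preim isoNf sB') (sq_preim_ge U f B') (sq_preim_le isoNf B') GUP.
move/(inSQ_sq_img isoNf (submx_refl U) (submx_trans (capmxSl _ _) ZV)).
have capE : (Z :&: sq_preim U f B' :=: sq_preim U f (sq_img U f Z :&: B'))%MS.
  apply: eqmx_trans (eqmx_sym (sq_preimI isoNf _ _)).
  exact: cap_eqmx (eqmx_sym (sq_imgK isoNf UZ ZV)) (eqmx_refl _).
by apply: eqmx_inSQ (sq_img0 isoNf) (eqmx_trans (sq_img_eqmx U f capE) (sq_preimK isoNf _)).
Qed.

Hypothesis tG : torsion_class G.

Let G_iso N M : iso N M -> G N -> G M. Proof. by case: tG => _ + _ _; apply. Qed.
Let G_ext M (U : 'M[F]_(mdim M)) :
  submod U -> inSQ G 0 U -> inSQ G U 1%:M -> G M.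
Proof. by case: tG => _ _ + _; apply. Qed.
Let G_quot M (U : 'M[F]_(mdim M)) : submod U -> G M -> inSQ G U 1%:M.
Proof. by case: tG => _ _ _; apply. Qed.

Lemma iso_sq_G N M (U V : 'M[F]_(mdim M)) : inSQ G U V -> iso_sq N U V -> G N.
Proof.
move=> [K [GK isoK]] /iso_sqP [f isoNf]; apply: G_iso GK.
have := iso_sq_img isoNf (submx_refl U) (submx_refl V) isoK.
exact: eqmx_iso_sq (sq_img0 isoNf) (sq_img1 isoNf).
Qed.

Lemma inSQ_trans M (U W V : 'M[F]_(mdim M)) :
  inSQ G U W -> inSQ G W V -> inSQ G U V.
Proof.
move=> GUW GWV; have [sU sW UW] := inSQ_submod GUW.
have [_ sV WV] := inSQ_submod GWV; have UV := submx_trans UW WV.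
have [N /iso_sqP [f isoNf]] := subquotient_exists sU sV UV.
exists N; split; last by apply/iso_sqP; exists f.
apply: (G_ext (submod_sq_img isoNf WV sW)).
  exact: eqmx_inSQ (sq_img0 isoNf) _ (inSQ_sq_img isoNf (submx_refl U) WV GUW).
exact: eqmx_inSQ _ (sq_img1 isoNf) (inSQ_sq_img isoNf UW (submx_refl V) GWV).
Qed.

Lemma inSQ_quot M (U W V : 'M[F]_(mdim M)) :
  submod W -> (U <= W)%MS -> (W <= V)%MS -> inSQ G U V -> inSQ G W V.
Proof.
move=> sW UW WV [N [GN /iso_sqP [f isoNf]]].
have := inSQ_sq_preim isoNf (G_quot (submod_sq_img isoNf WV sW) GN).
exact: eqmx_inSQ (sq_imgK isoNf UW WV) (sq_preim1 isoNf).
Qed.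

Lemma inSQ_zero M (U : 'M[F]_(mdim M)) : submod U -> inSQ G U U.
Proof.
have [B GB] : exists B, G B by case: tG.
apply: inSQ_diag; apply: inSQ_quot (submod1 B) (sub0mx _ _) (submx_refl _) _.
exact: G_inSQ.
Qed.

Lemma inSQ_adds M (A Y : 'M[F]_(mdim M)) :
  submod A -> inSQ G 0 Y -> inSQ G A (Y + A)%MS.
Proof.
move=> sA GY; have [s0 sY _] := inSQ_submod GY.
have := inSQ_quot (submod_cap sY (submod_adds s0 sA)) (sub0mx _ _) (capmxSl _ _) GY.
by move/(inSQ_addsmx s0 sA (sub0mx _ _)); apply: eqmx_inSQ (adds0mx _ A) (eqmx_refl _).
Qed.

Lemma strict_subobj0 M : strict_subobj G (0 : 'M[F]_(mdim M)).
Proof.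
split=> [|B' _]; first by split; [exact: submod0 | exact: inSQ_zero (submod0 M)].
by rewrite cap0mx; apply: inSQ_zero (submod0 M).
Qed.

Lemma inSQ_ext_adds M (Y U : 'M[F]_(mdim M)) : submod Y -> submod U ->
  inSQ G 0 (Y :&: U)%MS -> inSQ G U (Y + U)%MS -> inSQ G 0 Y.
Proof.
move=> sY sU GYU GU_YU.
apply: inSQ_trans (_ : inSQ G 0 (Y :&: (0 + U))%MS) (inSQ_capmx sY sU _).
  by rewrite adds0mx_id.
by rewrite adds0mx_id.
Qed.

Lemma inSQ_adds_strict_cap M (A U D : 'M[F]_(mdim M)) :
  strict_subobj G A -> subobj G U -> submod D -> inSQ G U D ->
  inSQ G U ((U + A) :&: D)%MS.
Proof.
move=> [_ strictA] [sU GU] sD GUD; have [_ _ UD] := inSQ_submod GUD.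
have GAD := strictA D (conj sD (inSQ_trans GU GUD)).
by apply: (eqmx_inSQ (eqmx_refl U) (matrix_modl A UD)); rewrite addsmxC; apply: inSQ_adds.
Qed.

(* For Y := sq_preim W :&: B', Y :&: U is in G by strictness of U, and
   (Y + U) / U by strictness of W in N ~= 1 / U. *)
Lemma strict_sq_preim_quot N M (U : 'M[F]_(mdim M)) f (W : 'M[F]_(mdim N)) :
  iso_sq_via N U 1%:M f -> strict_subobj G U -> strict_subobj G W ->
  strict_subobj G (sq_preim U f W).
Proof.
move=> isoNf [[sU GU] strictU] [[sW GW] strictW].
have sP := submod_sq_preim isoNf sW.
have UP : (U <= sq_preim U f W)%MS := sq_preim_ge U f W.
have GUP : inSQ G U (sq_preim U f W).
  exact: eqmx_inSQ (sq_preim0 U f) (eqmx_refl _) (inSQ_sq_preim isoNf GW).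
split=> [|B' [sB' GB']]; first by split=> //; apply: inSQ_trans GU GUP.
set Y := (sq_preim U f W :&: B')%MS.
apply: (inSQ_ext_adds (submod_cap sP sB') sU).
  apply: eqmx_inSQ (eqmx_refl _) _ (strictU B' (conj sB' GB')).
  rewrite [X in (_ :=: X)%MS]capmxC capmxA.
  exact: cap_eqmx (eqmx_sym (capmx_idPl UP)) (eqmx_refl _).
have sBU := submod_adds sB' sU.
have GimgBU : inSQ G 0 (sq_img U f (B' + U)%MS).
  apply: eqmx_inSQ (sq_img0 isoNf) (eqmx_refl _) _.
  exact: (inSQ_sq_img isoNf (submx_refl U) (submx1 _) (inSQ_adds sU GB')).
have := inSQ_sq_preim isoNf (strictW _ (conj (submod_sq_img isoNf (submx1 _) sBU) GimgBU)).
apply: eqmx_inSQ (sq_preim0 U f) _; apply: eqmx_trans (sq_preimI isoNf _ _) _.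
apply: eqmx_trans (cap_eqmx (eqmx_refl _) (sq_imgK isoNf (addsmxSr _ _) (submx1 _))) _.
exact: eqmx_sym (matrix_modr B' UP).
Qed.

End TorsionClass.

Section Filtrations.
Variables (F : fieldType) (L : falgType F).
Local Notation rmod := (rmod L).
Implicit Types (M N K : rmod) (C : mclass L).
Variable G : mclass L.
Hypothesis tG : torsion_class G.

(* The filtrations of Filt, generalised to run from U to V so that they can be
   concatenated: Filt G X M is convertible to
   G M /\ exists k Ms, strict_chain (strict_quot_of X) 0 1%:M k Ms. *)
Definition strict_chain C M (U V : 'M[F]_(mdim M)) k (Ms : nat -> 'M[F]_(mdim M)) :=
  [/\ (Ms 0%N == U)%MS, (Ms k == V)%MS,
      forall i, (i <= k)%N -> strict_subobj G (Ms i),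
      forall i, (0 < i <= k)%N -> (Ms i.-1 <= Ms i)%MS &
      forall i, (0 < i <= k)%N -> exists N, iso_sq N (Ms i.-1) (Ms i) /\ C N].

Lemma strict_chain_cat C M (U W V : 'M[F]_(mdim M)) k1 k2 Ms1 Ms2 :
  strict_chain C U W k1 Ms1 -> strict_chain C W V k2 Ms2 ->
  strict_chain C U V (k1 + k2)
    (fun i => if (i < k1)%N then Ms1 i else Ms2 (i - k1)%N).
Proof.
move=> [/eqmxP Ms1_0 /eqmxP Ms1_k strict1 mono1 fact1].
move=> [/eqmxP Ms2_0 /eqmxP Ms2_k strict2 mono2 fact2].
set Ms := fun i => _.
have junction : (Ms2 0%N :=: Ms1 k1)%MS := eqmx_trans Ms2_0 (eqmx_sym Ms1_k).
have stepP i : (0 < i <= k1 + k2)%N ->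
    [/\ (Ms i.-1 :=: Ms1 i.-1)%MS, (Ms i :=: Ms1 i)%MS & (0 < i <= k1)%N] \/
    [/\ (Ms i.-1 :=: Ms2 (i - k1)%N.-1)%MS, (Ms i :=: Ms2 (i - k1)%N)%MS &
     (0 < i - k1 <= k2)%N].
  move=> /andP [i_gt0 i_le]; rewrite /Ms.
  case: (ltnP i k1) => [i_lt | k1_le_i].
    by left; rewrite (leq_ltn_trans (leq_pred i) i_lt) i_gt0 ltnW.
  have ->: (i.-1 - k1 = (i - k1).-1)%N by rewrite -!subn1 -!subnDA addnC.
  case: (ltnP i.-1 k1) => [im1_lt | k1_le_im1].
    have i_k1 : i = k1 by lia.
    by left; rewrite i_k1 subnn; split=> //; rewrite -i_k1 i_gt0 leqnn.
  by right; split=> //; lia.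
split.
- rewrite /Ms; case: ifP => [_|]; first exact/eqmxP.
  rewrite lt0n => /negbFE/eqP k1_0; subst k1.
  by apply/eqmxP; apply: eqmx_trans junction Ms1_0.
- by rewrite /Ms ltnNge leq_addr /= addKn; apply/eqmxP.
- move=> i i_le; rewrite /Ms; case: ltnP => [/ltnW | k1_le_i]; first exact: strict1.
  by apply: strict2; rewrite leq_subLR.
- by move=> i /stepP [[-> -> /mono1] | [-> -> /mono2]].
- move=> i /stepP [[eq1 eq2 /fact1] | [eq1 eq2 /fact2]] [N [isoN CN]];
    by exists N; split; first exact: eqmx_iso_sq (eqmx_sym eq1) (eqmx_sym eq2) isoN.
Qed.

Lemma strict_chain_sq_preim C N M (U V : 'M[F]_(mdim M)) f k Ms :
  iso_sq_via N U V f ->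
  (forall W : 'M_(mdim N), strict_subobj G W -> strict_subobj G (sq_preim U f W)) ->
  strict_chain C (0 : 'M_(mdim N)) 1%:M k Ms ->
  strict_chain C U V k (fun i => sq_preim U f (Ms i)).
Proof.
move=> isoNf strict_preim [/eqmxP Ms0 /eqmxP Msk strictMs monoMs factMs]; split.
- by apply/eqmxP; apply: eqmx_trans (sq_preim_eqmx U f Ms0) (sq_preim0 U f).
- by apply/eqmxP; apply: eqmx_trans (sq_preim_eqmx U f Msk) (sq_preim1 isoNf).
- by move=> i /strictMs /strict_preim.
- by move=> i /monoMs; apply: sq_preimS.
- move=> i /factMs [K [isoK CK]].
  by exists K; split; first exact: (iso_sq_preim isoNf isoK).
Qed.

Section PseudoTorsionClass.
Variable P : mclass L.
Hypothesis pP : pseudo_torsion G P.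

Let P_G M : P M -> G M. Proof. by case: pP => _ + _ _; apply. Qed.
Let P_quot B N : P B -> strict_quot G N B -> P N.
Proof. by case: pP => _ _ + _; apply. Qed.
Let P_ext B (A : 'M[F]_(mdim B)) : G B -> strict_subobj G A ->
  inSQ P 0 A -> inSQ P A 1%:M -> P B.
Proof. by case: pP => _ _ _; apply. Qed.

Lemma pseudo_torsion_zero M (U : 'M[F]_(mdim M)) : submod U -> inSQ P U U.
Proof.
have [B PB] : exists B, P B by case: pP.
have [Z isoZ] := subquotient_exists (submod1 B) (submod1 B) (submx_refl _).
have PZ : P Z.
  apply: (P_quot PB); split; first exact: (P_G PB).
  by exists 1%:M; split; first exact: (strict_subobj1 (P_G PB)).
by apply: (inSQ_diag (U := 1%:M : 'M_(mdim B))); exists Z.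
Qed.

Lemma pseudo_torsion_inSQ M : inSQ P (0 : 'M[F]_(mdim M)) 1%:M -> P M.
Proof.
case=> K [PK isoK]; apply: (P_quot PK); split; first exact: (P_G PK).
by exists 0; split; [exact: (strict_subobj0 tG) | exact: (iso_sym isoK)].
Qed.

Lemma inSQ_pseudo_torsion_ext M (U V : 'M[F]_(mdim M)) :
  strict_subobj G U -> subobj G V -> (U <= V)%MS ->
  inSQ P 0 U -> inSQ P U V -> inSQ P 0 V.
Proof.
move=> [[sU GU] strictU] [sV GV] UV PU PUV.
have [N /iso_sqP [f isoNf]] := subquotient_exists (submod0 M) sV (sub0mx _ _).
exists N; split; last by apply/iso_sqP; exists f.
apply: (P_ext (A := sq_img 0 f U)).
- by apply: (iso_sq_G tG GV); apply/iso_sqP; exists f.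
- apply: strict_sq_img isoNf (sub0mx _ _) UV sU GU _.
  by move=> D sD _ _ GD; apply: strictU.
- exact: eqmx_inSQ (sq_img0 isoNf) (eqmx_refl _) (inSQ_sq_img isoNf (submx_refl 0) UV PU).
- apply: eqmx_inSQ (eqmx_refl _) (sq_img1 isoNf) _.
  exact: (inSQ_sq_img isoNf (sub0mx _ _) (submx_refl V) PUV).
Qed.

Lemma strict_chain_inSQ C M (V : 'M[F]_(mdim M)) k Ms :
  (forall N, C N -> P N) -> strict_chain C 0 V k Ms -> inSQ P 0 V.
Proof.
move=> CP [/eqmxP Ms0 /eqmxP Msk strictMs monoMs factMs].
suff PMs i : (i <= k)%N -> inSQ P 0 (Ms i).
  exact: eqmx_inSQ (eqmx_refl _) Msk (PMs k (leqnn k)).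
elim: i => [_ | i IHi ik].
  exact: eqmx_inSQ (eqmx_refl _) (eqmx_sym Ms0) (pseudo_torsion_zero (submod0 M)).
have [[sMs GMs] _] := strictMs i.+1 ik.
apply: inSQ_pseudo_torsion_ext (strictMs i (ltnW ik)) (conj sMs GMs) (monoMs i.+1 ik)
  (IHi (ltnW ik)) _.
by have [K [isoK CK]] := factMs i.+1 ik; exists K; split; first exact: CP.
Qed.

End PseudoTorsionClass.

Definition strict_quot_of (X : mclass L) : mclass L :=
  fun N => exists X0, X X0 /\ strict_quot G N X0.

Lemma strict_quot_G N B : strict_quot G N B -> G N.
Proof.
case=> GB [A [[[sA _] _] isoN]]; apply: (iso_sq_G tG _ isoN).
exact: (inSQ_quot tG sA (sub0mx _ _) (submx1 _) (G_inSQ GB)).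
Qed.

Lemma strict_quot_trans N N2 B (W : 'M[F]_(mdim N)) :
  strict_quot G N B -> strict_subobj G W -> iso_sq N2 W 1%:M -> strict_quot G N2 B.
Proof.
move=> [GB [Y [strictY /iso_sqP [f isoNf]]]] strictW isoN2; split=> //.
exists (sq_preim Y f W); split; first exact: (strict_sq_preim_quot tG isoNf strictY strictW).
exact: eqmx_iso_sq (eqmx_refl _) (sq_preim1 isoNf) (iso_sq_preim isoNf isoN2).
Qed.

Lemma inSQ_strict_quot_of_quot X M (U W V : 'M[F]_(mdim M)) :
  inSQ (strict_quot_of X) U V -> (U <= W)%MS -> (W <= V)%MS -> submod W ->
  inSQ G U W ->
  (forall D : 'M[F]_(mdim M), submod D -> (U <= D)%MS -> (D <= V)%MS ->
     inSQ G U D -> inSQ G U (W :&: D)%MS) ->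
  inSQ (strict_quot_of X) W V.
Proof.
move=> [N [[X0 [XX0 sqN]] /iso_sqP [f isoNf]]] UW WV sW GUW strictW.
have strictWN := strict_sq_img isoNf UW WV sW GUW strictW.
have [N2 isoN2] := subquotient_exists (submod_sq_img isoNf WV sW) (submod1 N) (submx1 _).
exists N2; split; first by exists X0; split; last exact: strict_quot_trans sqN strictWN isoN2.
exact: eqmx_iso_sq (sq_imgK isoNf UW WV) (sq_preim1 isoNf) (iso_sq_preim isoNf isoN2).
Qed.

(* (V + A) / (U + A) ~= V / (V :&: (U + A)), a strict quotient of V / U. *)
Lemma inSQ_strict_quot_of_adds X M (A U V : 'M[F]_(mdim M)) :
  strict_subobj G A -> subobj G U -> submod V -> (U <= V)%MS ->
  inSQ (strict_quot_of X) U V -> inSQ (strict_quot_of X) (U + A)%MS (V + A)%MS.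
Proof.
move=> strictA [sU GU] sV UV sqUV; have [[sA _] _] := strictA.
have GUV : inSQ G U V by apply: inSQ_sub sqUV => N [X0 [_ /strict_quot_G]].
apply: (inSQ_addsmx sU sA UV); rewrite capmxC.
apply: inSQ_strict_quot_of_quot sqUV _ (capmxSr _ _) _ _ _.
- by rewrite sub_capmx addsmxSl UV.
- exact: submod_cap (submod_adds sU sA) sV.
- exact: (inSQ_adds_strict_cap tG strictA (conj sU GU) sV GUV).
move=> D sD _ DV GUD; rewrite -capmxA.
apply: eqmx_inSQ (eqmx_refl U) (cap_eqmx (eqmx_refl _) (eqmx_sym (capmx_idPr DV))) _.
exact: (inSQ_adds_strict_cap tG strictA (conj sU GU) sD GUD).
Qed.

Lemma strict_chain_quot X B N (A : 'M[F]_(mdim B)) f k Ms :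
  strict_subobj G A -> iso_sq_via N A 1%:M f ->
  strict_chain (strict_quot_of X) (0 : 'M_(mdim B)) 1%:M k Ms ->
  strict_chain (strict_quot_of X) (0 : 'M_(mdim N)) 1%:M k
    (fun i => sq_img A f (Ms i + A)%MS).
Proof.
move=> strictA isoNf [/eqmxP Ms0 /eqmxP Msk strictMs monoMs factMs].
have [[sA GA] _] := strictA.
split.
- apply/eqmxP; apply: eqmx_trans _ (sq_img0 isoNf); apply: sq_img_eqmx.
  exact: eqmx_trans (adds_eqmx Ms0 (eqmx_refl A)) (adds0mx _ A).
- apply/eqmxP; apply: eqmx_trans _ (sq_img1 isoNf); apply: sq_img_eqmx.
  exact: eqmx_trans (adds_eqmx Msk (eqmx_refl A)) (addsmx_idPl (submx1 A)).
- move=> i ik; have strictMi := strictMs i ik; have [[sMi GMi] _] := strictMi.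
  apply: strict_sq_img isoNf (addsmxSr _ _) (submx1 _) (submod_adds sMi sA) _ _.
    exact: (inSQ_adds tG sA GMi).
  move=> D sD _ _ GAD; rewrite addsmxC.
  exact: (inSQ_adds_strict_cap tG strictMi (conj sA GA) sD GAD).
- by move=> i /monoMs Mi; rewrite sq_imgS // addsmxS.
- move=> i ik; have /andP [_ i_le] := ik.
  have [[sMi1 GMi1] _] := strictMs i.-1 (leq_trans (leq_pred i) i_le).
  have [[sMi _] _] := strictMs i i_le.
  have [K [isoK sqK]] := factMs i ik.
  have := inSQ_strict_quot_of_adds strictA (conj sMi1 GMi1) sMi (monoMs i ik)
    (ex_intro _ K (conj sqK isoK)).
  by case/(inSQ_sq_img isoNf (addsmxSr _ _) (submx1 _)) => K' [sqK' isoK']; exists K'.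
Qed.

Lemma Filt_nonempty X : exists M, Filt G X M.
Proof.
have [B GB] : exists B, G B by case: tG.
have [Z [GZ isoZ]] := inSQ_quot tG (submod1 B) (sub0mx _ _) (submx_refl _) (G_inSQ GB).
exists Z; split=> //; exists 0%N, (fun=> 0); split=> //.
- by apply/eqmxP.
- by rewrite (iso_sq_diag_trivial isoZ); apply/eqmxP.
- by move=> i _; apply: strict_subobj0.
- by move=> [|i] /andP [].
Qed.

Lemma Filt_strict_quot X B N : Filt G X B -> strict_quot G N B -> Filt G X N.
Proof.
move=> [_ [k [Ms chainMs]]] sqN; split; first exact: strict_quot_G sqN.
have [_ [A [strictA /iso_sqP [f isoNf]]]] := sqN.
exists k, (fun i => sq_img A f (Ms i + A)%MS).
exact: strict_chain_quot strictA isoNf chainMs.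
Qed.

Lemma Filt_strict_ext X B (A : 'M[F]_(mdim B)) : G B -> strict_subobj G A ->
  inSQ (Filt G X) 0 A -> inSQ (Filt G X) A 1%:M -> Filt G X B.
Proof.
move=> GB strictA [NA [[_ [ka [a chain_a]]] /iso_sqP [fA isoA]]].
move=> [NC [[_ [kc [c chain_c]]] /iso_sqP [fC isoC]]].
have chainA := strict_chain_sq_preim isoA
  (fun W => strict_sq_preim_sub isoA strictA) chain_a.
have chainC := strict_chain_sq_preim isoC
  (fun W => strict_sq_preim_quot tG isoC strictA) chain_c.
split=> //; exists (ka + kc)%N.
exists (fun i => if (i < ka)%N then sq_preim 0 fA (a i) else sq_preim A fC (c (i - ka)%N)).
exact: strict_chain_cat chainA chainC.
Qed.

Lemma Filt_min X P : pseudo_torsion G P -> (forall M, X M -> P M) ->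
  forall M, Filt G X M -> P M.
Proof.
move=> pP XP M [_ [k [Ms chainMs]]]; apply: (pseudo_torsion_inSQ pP).
apply: (strict_chain_inSQ pP _ chainMs) => N [X0 [XX0 sqN]].
by case: pP => _ _ P_quot _; apply: P_quot (XP _ XX0) sqN.
Qed.

End Filtrations.

Theorem mainTheorem10 (F : fieldType) (L : falgType F) (G : mclass L)
    (X : mclass L) :
  torsion_class G -> (forall M, X M -> G M) ->
  pseudo_torsion G (Filt G X) /\
  (forall P : mclass L, pseudo_torsion G P -> (forall M, X M -> P M) ->
     forall M, Filt G X M -> P M).
Proof.
move=> tG _; split; last exact: (Filt_min tG).
split.
- exact: (Filt_nonempty tG X).
- by move=> M [].
- exact: (Filt_strict_quot tG).
- exact: (Filt_strict_ext tG).
Qed.
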